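(* For $(\lambda,z)\in(0,1]\times(0,1]$, the $2N\times2N$ matrix $$K(\lambda,z)=\begin{pmatrix}0&B(1;\lambda,z)\\ B(-1;\lambda,z)&0\end{pmatrix}$$ has non-negative entries and is irreducible. For $(\lambda,z)\in(0,1)\times(0,1]$, the spectral radius of $K(\lambda,z)$ is strictly less than $1$.
   Context: Fix an integer $N\ge 3$. Let $\mathcal G_N$ be the groupoid with object set $\{1,\dots,N\}$ generated by arrows $A_{i,j}^{(k)}$, $i\neq j\in\{1,\dots,N\}$, $k\in\{-1,1\}$, with source $i$ and target $j$, subject to the relations $A_{i,j}^{(k)}A_{j,\ell}^{(k)}=A_{i,\ell}^{(k)}$ for all $i,j,\ell$, $k$, with the convention $A_{i,i}^{(k)}:=e_i$ (unit at object $i$). Let $\mathcal A$ be its arrow set. Every arrow has a unique reduced representation: either empty or $\prod_{\ell=1}^dA_{i_\ell,j_\ell}^{(k_\ell)}$ with alternating upper indices and $i_\ell\ne j_\ell$. A metric $|\cdot|_{\mathcal K}$ is given by values $|A_{i,j}^{(k)}|_{\mathcal K}\ge0$ on generators, $|e_i|_{\mathcal K}=0$, and $|w|_{\mathcal K}=\sum_\ell|A_{i_\ell,j_\ell}^{(k_\ell)}|_{\mathcal K}$ over the reduced representation of $w$. Let $\{W_n\}_{n\ge0}$ be the Markov chain on $\mathcal A$ with $P(W_{n+1}=y\mid W_n=x)=p_{i,j}^{(k)}$ if $x^{-1}y=A_{i,j}^{(k)}$ with $i\ne j$ and $0$ otherwise, where $p_{i,j}^{(k)}\in(0,1)$ and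 $\sum_{j\ne i}\sum_{k=\pm1}p_{i,j}^{(k)}=1$ for each $i$; $E_x$ denotes expectation with $W_0=x$. For $x\in\mathcal A$ let $T(0,x)=\inf\{n\ge0:W_n=W_0x\}$ (possibly $\infty$), and $R_{i,j}^{(k)}(\lambda)=E_{e_i}[\lambda^{T(0,A_{i,j}^{(k)})}]$ for $\lambda\in(0,1]$. Let $B(k;\lambda,z)$ be the $N\times N$ matrix with entries $[B(k;\lambda,z)]_{i,j}=(1-\delta_{i,j})z^{|A_{i,j}^{(k)}|_{\mathcal K}}R_{i,j}^{(k)}(\lambda)$. *)

From mathcomp Require Import all_boot all_order all_algebra.
From mathcomp Require Import all_classical all_reals all_analysis.
From mathcomp Require Import complex.
Set Implicit Arguments. Unset Strict Implicit. Unset Printing Implicit Defensive.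
Import Order.TTheory GRing.Theory Num.Theory.
Local Open Scope ring_scope.

(* Objects {1,..,N} are 'I_N.  The upper index k in {-1,1} is encoded by a
   boolean: true <-> k = 1, false <-> k = -1.
   A generator A_{i,j}^{(k)} is the letter (i, j, k). *)
Definition letter (N : nat) := ('I_N * 'I_N * bool)%type.

(* An arrow with source i0 is represented by its reduced representation
   (alternating upper indices, i_l <> j_l, composable), stored in REVERSE
   order (most recent letter first); the empty word is e_{i0}. *)

Definition target N (i0 : 'I_N) (rw : seq (letter N)) : 'I_N :=
  if rw is (a, b, k) :: _ then b else i0.

(* right multiplication of a reduced word (with target i) by the generator
   A_{i,j}^{(k)}, i <> j, computed with the relations
   A_{a,i}^{(k)} A_{i,j}^{(k)} = A_{a,j}^{(k)} and A_{a,a}^{(k)} = e_a. *)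
Definition mulgen N (rw : seq (letter N)) (g : letter N) : seq (letter N) :=
  let: (i, j, k) := g in
  match rw with
  | [::] => [:: (i, j, k)]
  | (a, b, k') :: rest =>
      if k' == k then (if a == j then rest else (a, j, k) :: rest)
      else (i, j, k) :: rw
  end.

(* hitprob p i0 tw n rw = P(first time n >= 0 at which the chain, currently
   at the arrow rw (source i0), is at tw equals n), where the chain moves
   from x to x A_{t,j}^{(k)} (t = target of x, j <> t) with probability
   p t j k. *)
Fixpoint hitprob (R : realType) N (p : 'I_N -> 'I_N -> bool -> R)
  (i0 : 'I_N) (tw : seq (letter N)) (n : nat) (rw : seq (letter N)) : R :=
  match n with
  | 0 => if rw == tw then 1 else 0
  | n'.+1 =>
      if rw == tw then 0 else
      let t := target i0 rw in
      \sum_(j < N | j != t) \sum_(k : bool)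
         p t j k * hitprob p i0 tw n' (mulgen rw (t, j, k))
  end.

(* R_{i,j}^{(k)}(lambda) = E_{e_i}[lambda^{T(0, A_{i,j}^{(k)})}]
   = sum_{n >= 0} lambda^n P_{e_i}(T = n)   (convention lambda^oo = 0). *)
Definition Rgen (R : realType) N (p : 'I_N -> 'I_N -> bool -> R)
  (i j : 'I_N) (k : bool) (lam : R) : R :=
  limn (fun n => \sum_(0 <= m < n) lam ^+ m * hitprob p i [:: (i, j, k)] m [::]).

(* the matrix B(k; lambda, z); len i j k = |A_{i,j}^{(k)}|_K *)
Definition Bmx (R : realType) N (p : 'I_N -> 'I_N -> bool -> R)
  (len : 'I_N -> 'I_N -> bool -> R) (k : bool) (lam z : R) : 'M[R]_N :=
  \matrix_(i, j) ((1 - (i == j)%:R) * (z `^ (len i j k)) * Rgen p i j k lam).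

Definition Kmx (R : realType) N (p : 'I_N -> 'I_N -> bool -> R)
  (len : 'I_N -> 'I_N -> bool -> R) (lam z : R) : 'M[R]_(N + N) :=
  block_mx 0 (Bmx p len true lam z) (Bmx p len false lam z) 0.

Definition nonneg_mx (R : realType) n (A : 'M[R]_n) : Prop :=
  forall i j, 0 <= A i j.

Definition irreducible_mx (R : realType) n (A : 'M[R]_n) : Prop :=
  forall i j, exists m : nat, 0 < (A ^+ m) i j.

Definition eigenvalueC (R : realType) n (A : 'M[R]_n) (mu : R[i]) : bool :=
  root (char_poly (map_mx (fun x : R => (x%:C)%C) A)) mu.

Definition spectral_radius (R : realType) n (A : 'M[R]_n) : R :=
  sup [set ComplexField.Normc.normc mu | mu in [set mu | eigenvalueC A mu]]%classic.

From mathcomp Require Import all_boot all_order all_algebra.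
From mathcomp Require Import all_classical all_reals all_analysis.
From mathcomp Require Import complex.
From mathcomp Require Import ring.
Import Order.TTheory GRing.Theory Num.Theory.
Import numFieldNormedType.Exports.
Set Implicit Arguments. Unset Strict Implicit. Unset Printing Implicit Defensive.
Local Open Scope ring_scope.

(* Entries of K are generating functions of hitting times, hence non-negative, and
   B(k) i j >= p i j k * lambda * z^|A| > 0 off the diagonal; the positivity pattern of K is
   the bipartite double of the complete graph on N >= 3 vertices, which is connected.
   For the spectral radius, z <= 1 lets us drop z.  A product of R's along an alternating
   path t = j_0, j_1, ..., j_n is, by translation invariance of the walk and the strong
   Markov property, at most the lambda-discounted expected number of visits to the reduced
   word A_{j_0 j_1} A_{j_1 j_2} ... A_{j_(n-1) j_n}.  Distinct paths give distinct words, so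
   summing over all paths of all lengths gives at most sum_m lambda^m = 1/(1 - lambda).
   Hence the partial sums of K^m 1 are bounded by 1/(1 - lambda); comparing with a maximal
   coordinate of an eigenvector shows |mu|^m is dominated the same way, so |mu| <= lambda. *)

Section ReducedWords.
Variable N : nat.
Local Notation word := (seq (letter N)).

Definition alternates (rw : word) (k : bool) : bool :=
  if rw is (_, _, k') :: _ then k' != k else true.

Fixpoint reduced (i0 : 'I_N) (rw : word) : bool :=
  if rw is (a, b, k) :: rest then
    [&& a != b, a == target i0 rest, reduced i0 rest & alternates rest k]
  else true.

Lemma mulgen_cons rw a b k : alternates rw k -> mulgen rw (a, b, k) = (a, b, k) :: rw.
Proof. by case: rw => [|[[c d] k'] r] //= /negbTE ->. Qed.

Lemma mulgen_reduced i0 rw j k : reduced i0 rw -> j != target i0 rw ->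
  reduced i0 (mulgen rw (target i0 rw, j, k)) /\
  target i0 (mulgen rw (target i0 rw, j, k)) = j.
Proof.
case: rw => [|[[a b] k'] rest] /=; first by move=> _ jt; rewrite eq_sym jt eqxx.
case/and4P=> ab /eqP hat wr alt jb.
case: eqP => [<-|kk].
  case: eqP => [ja|ja]; first by subst.
  split=> //=; rewrite hat eqxx wr alt andbT /=.
  by rewrite andbT -hat; apply/eqP.
split=> //=; rewrite eq_sym jb eqxx ab -hat eqxx wr alt /alternates /=.
by apply/eqP=> e; apply: kk; rewrite e.
Qed.

Lemma mulgen_mulgen i0 rw a b j k : reduced i0 rw -> target i0 rw = a -> a != b -> b != j ->
  mulgen (mulgen rw (a, b, k)) (b, j, k) = if a == j then rw else mulgen rw (a, j, k).
Proof.
case: rw => [|[[c d] k2] r] /=; first by move=> _ _ _ _; rewrite eqxx; case: (a == j).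
case/and4P=> cd /eqP cr wr alt da ab bj; subst d.
case: (eqVneq k2 k) => [e|_]; last by rewrite eqxx.
subst k2.
case: (eqVneq c b) => [cb|cb]; last first.
  by rewrite eqxx; case: (eqVneq a j) => [<-|//]; rewrite (negbTE cd).
rewrite cb (negbTE bj).
by case: (eqVneq a j) => [<-|aj]; case: r {cd cr wr} alt => [|[[e f] k3] r'] //= alt;
  rewrite (negbTE alt).
Qed.

(* The groupoid product x y: the letters of y are multiplied onto x, oldest first. *)
Definition wmul (x y : word) : word := foldr (fun g acc => mulgen acc g) x y.

Lemma wmul_reduced i0 x y : reduced i0 x -> reduced (target i0 x) y ->
  reduced i0 (wmul x y) /\ target i0 (wmul x y) = target (target i0 x) y.
Proof.
move=> wx; elim: y => [|[[a b] k] y IH] //= /and4P[ab /eqP ay wy _].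
have [w1 t1] := IH wy.
have := @mulgen_reduced i0 (wmul x y) b k w1.
by rewrite t1 -ay eq_sym ab => /(_ isT).
Qed.

Lemma wmul_mulgen i0 x y j k : reduced i0 x -> reduced (target i0 x) y ->
  j != target (target i0 x) y ->
  wmul x (mulgen y (target (target i0 x) y, j, k)) =
  mulgen (wmul x y) (target (target i0 x) y, j, k).
Proof.
move=> wx; case: y => [|[[a b] k'] rest] //= /and4P[ab /eqP ar wr alt] bj.
rewrite -[RHS]/(mulgen (mulgen (wmul x rest) (a, b, k')) (b, j, k)).
case: (eqVneq k' k) => [<-|//].
have [w1 t1] := wmul_reduced wx wr.
rewrite (mulgen_mulgen _ w1) ?t1 //; last by rewrite eq_sym.
by case: (a == j).
Qed.

Lemma wmul0w t y : reduced t y -> wmul [::] y = y.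
Proof.
elim: y => [|[[a b] k] y IH] //= /and4P[ab /eqP ay wy alt].
rewrite IH //; case: y {IH} ay wy alt => [|[[c d] k2] y'] //= _ _ alt.
by rewrite (negbTE alt).
Qed.

Lemma wmulA i0 x y z : reduced i0 x -> reduced (target i0 x) y ->
  reduced (target (target i0 x) y) z -> wmul x (wmul y z) = wmul (wmul x y) z.
Proof.
move=> wx wy; elim: z => [|[[c d] k] z IH] // /and4P[cd /eqP cz wz alt].
change (wmul x (mulgen (wmul y z) (c, d, k)) = mulgen (wmul (wmul x y) z) (c, d, k)).
rewrite -IH //; have [w1 t1] := wmul_reduced wy wz.
have := @wmul_mulgen i0 x (wmul y z) d k wx.
by rewrite t1 -cz eq_sym cd => /(_ w1 isT).
Qed.

Fixpoint winv (x : word) : word :=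
  if x is (a, b, k) :: x' then wmul [:: (b, a, k)] (winv x') else [::].

Lemma winv_reduced i0 x : reduced i0 x ->
  [/\ reduced (target i0 x) (winv x), target (target i0 x) (winv x) = i0 &
      wmul (winv x) x = [::]].
Proof.
elim: x => [|[[a b] k] x IH] // /and4P[ab /eqP ax wx alt]; subst a.
have [w1 t1 l1] := IH wx.
have wba : reduced b [:: (b, target i0 x, k)] by rewrite /= eq_sym ab eqxx.
have [w2 t2] := wmul_reduced wba w1.
split => //; first by rewrite t2.
change (mulgen (wmul (wmul [:: (b, target i0 x, k)] (winv x)) x) (target i0 x, b, k) = [::]).
by rewrite -(wmulA wba) ?t1 //= l1 /= !eqxx.
Qed.

Lemma wmulI i0 x y1 y2 : reduced i0 x ->
  reduced (target i0 x) y1 -> reduced (target i0 x) y2 ->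
  wmul x y1 = wmul x y2 -> y1 = y2.
Proof.
move=> wx w1 w2 e; have [wi ti li] := winv_reduced wx.
rewrite -(wmul0w w1) -(wmul0w w2) -li.
by rewrite -!(wmulA wi) ?ti // e.
Qed.

End ReducedWords.

Section RandomWalk.
Variables (R : realType) (N : nat) (p : 'I_N -> 'I_N -> bool -> R).
Local Notation word := (seq (letter N)).

Lemma hitprob_wmul i0 x tw m y : reduced i0 x ->
  reduced (target i0 x) tw -> reduced (target i0 x) y ->
  hitprob p (target i0 x) tw m y = hitprob p i0 (wmul x tw) m (wmul x y).
Proof.
move=> wx wtw.
have eq_tw v : reduced (target i0 x) v -> (wmul x v == wmul x tw) = (v == tw).
  by move=> wv; apply/eqP/eqP => [/(wmulI wx wv wtw)|->].
elim: m y => [|m IH] y wy /=; rewrite eq_tw //; case: (y == tw) => //.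
have [w1 t1] := wmul_reduced wx wy.
rewrite t1; apply: eq_bigr => j jt; apply: eq_bigr => k _.
have [w2 _] := mulgen_reduced k wy jt.
by rewrite IH // (wmul_mulgen k wx wy jt).
Qed.

Hypothesis p_ge0 : forall i j k, i != j -> 0 <= p i j k.
Hypothesis p_sum : forall i, \sum_(j < N | j != i) \sum_(k : bool) p i j k = 1.
Variable i0 : 'I_N.

Definition step (g : word -> R) (rw : word) : R :=
  \sum_(j < N | j != target i0 rw) \sum_(k : bool)
     p (target i0 rw) j k * g (mulgen rw (target i0 rw, j, k)).

Lemma step_ge0 g rw : (forall w, 0 <= g w) -> 0 <= step g rw.
Proof.
move=> g0; apply: sumr_ge0 => j jt; apply: sumr_ge0 => k _.
by rewrite mulr_ge0 // p_ge0 // eq_sym.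
Qed.

Lemma step_le g g' rw : (forall w, g w <= g' w) -> step g rw <= step g' rw.
Proof.
move=> gg; apply: ler_sum => j jt; apply: ler_sum => k _.
by rewrite ler_wpM2l // p_ge0 // eq_sym.
Qed.

Lemma step_cst c rw : step (fun=> c) rw = c.
Proof.
rewrite /step -[RHS]mul1r -(p_sum (target i0 rw)) mulr_suml.
by apply: eq_bigr => j _; rewrite mulr_suml.
Qed.

Lemma step_sum (I : Type) (r : seq I) (P : pred I) (F : I -> word -> R) rw :
  step (fun w => \sum_(i <- r | P i) F i w) rw = \sum_(i <- r | P i) step (F i) rw.
Proof.
rewrite /step [RHS]exchange_big; apply: eq_bigr => j _.
by rewrite [RHS]exchange_big; apply: eq_bigr => k _; rewrite mulr_sumr.
Qed.

Lemma step_scale a g rw : step (fun w => a * g w) rw = a * step g rw.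
Proof.
rewrite /step mulr_sumr; apply: eq_bigr => j _; rewrite mulr_sumr.
by apply: eq_bigr => k _; rewrite mulrCA.
Qed.

Lemma hitprobS tw n rw :
  hitprob p i0 tw n.+1 rw = if rw == tw then 0 else step (hitprob p i0 tw n) rw.
Proof. by []. Qed.

Lemma hitprob_ge0 tw n rw : 0 <= hitprob p i0 tw n rw.
Proof.
elim: n rw => [|n IH] rw /=; first by case: (rw == tw).
by case: (rw == tw) => //; apply: step_ge0.
Qed.

Variable lam : R.
Hypothesis lam_ge0 : 0 <= lam.

Fixpoint green (n : nat) (f : word -> R) (rw : word) : R :=
  if n is n'.+1 then f rw + lam * step (green n' f) rw else 0.

Lemma green_ge0 n f rw : (forall w, 0 <= f w) -> 0 <= green n f rw.
Proof.
move=> f0; elim: n rw => [|n IH] rw //=.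
by rewrite addr_ge0 ?mulr_ge0 ?step_ge0.
Qed.

Lemma green_le_inv n f rw : lam < 1 -> (forall w, f w <= 1) -> green n f rw <= (1 - lam)^-1.
Proof.
move=> l1 f1; have l0 : 0 < 1 - lam by rewrite subr_gt0.
elim: n rw => [|n IH] rw /=; first by rewrite invr_ge0 ltW.
apply: (@le_trans _ _ (1 + lam * (1 - lam)^-1)).
  by rewrite lerD // ler_wpM2l // -[X in _ <= X](step_cst _ rw) step_le.
by rewrite -[X in X + _](divff (lt0r_neq0 l0)) -mulrDl subrK mul1r.
Qed.

Lemma green_leq n n' f rw : (forall w, 0 <= f w) -> (n <= n')%N -> green n f rw <= green n' f rw.
Proof.
move=> f0; elim: n n' rw => [|n IH] [|n'] rw //= nn'; first exact: (green_ge0 n'.+1).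
by rewrite lerD // ler_wpM2l // step_le // => w; apply: IH.
Qed.

Lemma green_sum (I : Type) (r : seq I) (P : pred I) (F : I -> word -> R) n rw :
  green n (fun w => \sum_(i <- r | P i) F i w) rw = \sum_(i <- r | P i) green n (F i) rw.
Proof.
elim: n rw => [|n IH] rw /=; first by rewrite big1.
rewrite (_ : green n _ = fun w => \sum_(i <- r | P i) green n (F i) w); last exact: funext.
by rewrite step_sum mulr_sumr -big_split.
Qed.

Definition hitgf (T : nat) (tw rw : word) : R :=
  \sum_(m < T) lam ^+ m * hitprob p i0 tw m rw.

Lemma hitgf_ge0 T tw rw : 0 <= hitgf T tw rw.
Proof. by apply: sumr_ge0 => m _; rewrite mulr_ge0 ?exprn_ge0 ?hitprob_ge0. Qed.

Lemma hitgfS T tw rw : hitgf T.+1 tw rw = if rw == tw then 1 else lam * step (hitgf T tw) rw.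
Proof.
rewrite /hitgf big_ord_recl expr0 mul1r.
case: (eqVneq rw tw) => [->|ne].
  rewrite big1 ?addr0 => [|m _]; first by rewrite /= eqxx.
  by rewrite hitprobS eqxx mulr0.
under eq_bigr => m _ do rewrite hitprobS (negbTE ne) exprS -mulrA.
rewrite /= (negbTE ne) add0r -mulr_sumr step_sum; congr (_ * _).
by apply: eq_bigr => m _; rewrite step_scale.
Qed.

(* The strong Markov property at the hitting time of tw, in truncated form. *)
Lemma hitgf_green_le T T' tw f rw : (forall w, 0 <= f w) ->
  hitgf T tw rw * green T' f tw <= green (T + T') f rw.
Proof.
move=> f0; elim: T rw => [|T IH] rw; first by rewrite /hitgf big_ord0 mul0r green_ge0.
rewrite hitgfS; case: (eqVneq rw tw) => [->|ne].
  by rewrite mul1r green_leq // leq_addl.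
rewrite addSn /= -mulrA -[X in X <= _]add0r lerD // ler_wpM2l //.
by rewrite mulrC -step_scale step_le // => w; rewrite mulrC IH.
Qed.

Lemma hitgf_le1 T tw rw : lam <= 1 -> hitgf T tw rw <= 1.
Proof.
move=> l1; elim: T rw => [|T IH] rw; first by rewrite /hitgf big_ord0 ler01.
rewrite hitgfS; case: (rw == tw) => //.
apply: (@le_trans _ _ (step (hitgf T tw) rw)).
  by rewrite ler_piMl // step_ge0 // => w; apply: hitgf_ge0.
by rewrite -[X in _ <= X](step_cst 1 rw) step_le.
Qed.

End RandomWalk.

Fixpoint altpath_sum (R : ringType) N (Rf : 'I_N -> 'I_N -> bool -> R)
    (n : nat) (t : 'I_N) (k : bool) : R :=
  if n is n'.+1 then \sum_(j < N | j != t) Rf t j k * altpath_sum Rf n' j (~~ k) else 1.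

Lemma altpath_sum_ge0 (R : numDomainType) N (Rf : 'I_N -> 'I_N -> bool -> R) n t k :
  (forall i j k, 0 <= Rf i j k) -> 0 <= altpath_sum Rf n t k.
Proof.
move=> Rf0; elim: n t k => [|n IH] t k /=; first exact: ler01.
by apply: sumr_ge0 => j _; rewrite mulr_ge0.
Qed.

Lemma sum_eqn_le1 (R : numDomainType) M (s : nat) : \sum_(n < M) ((s == n)%:R : R) <= 1.
Proof.
elim: M => [|M IH]; first by rewrite big_ord0 ler01.
rewrite big_ord_recr /=; case: (eqVneq s M) => [->|_]; last by rewrite addr0.
by rewrite big1 ?add0r // => n _; rewrite gtn_eqF.
Qed.

Lemma sum_eq_le1 (R : numDomainType) (I : finType) (P : pred I) (b : I) :
  \sum_(j | P j) ((j == b)%:R : R) <= 1.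
Proof.
rewrite big_mkcond (bigD1 b) //= eqxx big1 ?addr0 => [|j /negbTE ->]; last by case: (P j).
by case: (P b).
Qed.

Section AlternatingPaths.
Variables (R : realType) (N : nat) (p : 'I_N -> 'I_N -> bool -> R).
Hypothesis p_ge0 : forall i j k, i != j -> 0 <= p i j k.
Hypothesis p_sum : forall i, \sum_(j < N | j != i) \sum_(k : bool) p i j k = 1.
Variable lam : R.
Hypothesis lam_ge0 : 0 <= lam.
Local Notation word := (seq (letter N)).

Definition Rtrunc (T : nat) (t j : 'I_N) (k : bool) : R :=
  hitgf p t lam T [:: (t, j, k)] [::].

Variable i0 : 'I_N.

(* The number of ways to obtain w from rw0 by appending n letters of alternating signs,
   the first of sign k. *)
Fixpoint ext_count (n : nat) (rw0 : word) (k : bool) (w : word) : R :=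
  if n is n'.+1 then
    \sum_(j < N | j != target i0 rw0) ext_count n' ((target i0 rw0, j, k) :: rw0) (~~ k) w
  else (w == rw0)%:R.

Lemma ext_count_ge0 n rw0 k w : 0 <= ext_count n rw0 k w.
Proof.
elim: n rw0 k => [|n IH] rw0 k /=; first by rewrite ler0n.
by apply: sumr_ge0 => j _.
Qed.

Lemma ext_count_le n rw0 k w :
  ext_count n rw0 k w <= ((size w == n + size rw0)%N && (drop n w == rw0))%:R.
Proof.
elim: n rw0 k => [|n IH] rw0 k /=.
  by rewrite drop0; case: eqP => [->|_]; rewrite ?eqxx ?ler0n.
apply: (@le_trans _ _ (\sum_(j < N | j != target i0 rw0)
   ((size w == (n + (size rw0).+1)%N) && (drop n w == (target i0 rw0, j, k) :: rw0))%:R)).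
  by apply: ler_sum => j _; apply: IH.
have -> : drop n.+1 w = behead (drop n w) by rewrite -add1n -drop_drop drop1.
rewrite addnS.
case: (size w == (n + size rw0).+1); last by rewrite big1.
case: (drop n w) => [|[[a b] c] r] /=; first by rewrite big1.
case: (eqVneq r rw0) => [->|ne]; last first.
  by rewrite big1 // => j _; rewrite eqseq_cons (negbTE ne) andbF.
apply: le_trans (sum_eq_le1 R (fun j => j != target i0 rw0) b); apply: ler_sum => j _.
by rewrite eqseq_cons eqxx andbT; case: eqP => [[_ -> _]|]; rewrite ?eqxx ?ler0n.
Qed.

Lemma sum_ext_count_le1 M k w : \sum_(n < M) ext_count n [::] k w <= 1.
Proof.
apply: le_trans (sum_eqn_le1 R M (size w)); apply: ler_sum => n _.
apply: le_trans (ext_count_le _ _ _ _) _; rewrite addn0.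
by case: (size w == n); rewrite ?ler0n //= lern1 leq_b1.
Qed.

Lemma Rtrunc_hitgf T rw0 j k : reduced i0 rw0 -> alternates rw0 k -> j != target i0 rw0 ->
  Rtrunc T (target i0 rw0) j k = hitgf p i0 lam T ((target i0 rw0, j, k) :: rw0) rw0.
Proof.
move=> wr ak jt; apply: eq_bigr => m _; congr (_ * _).
have wtw : reduced (target i0 rw0) [:: (target i0 rw0, j, k)] by rewrite /= eq_sym jt eqxx.
rewrite (hitprob_wmul p m wr wtw (isT : reduced _ [::])).
by rewrite [wmul rw0 _]mulgen_cons.
Qed.

Lemma altpath_green_le T n rw0 k : reduced i0 rw0 -> alternates rw0 k ->
  altpath_sum (Rtrunc T) n (target i0 rw0) k <= green p i0 lam (n * T).+1 (ext_count n rw0 k) rw0.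
Proof.
elim: n rw0 k => [|n IH] rw0 k wr ak.
  by rewrite /= eqxx lerDl mulr_ge0 // step_ge0.
rewrite (_ : ext_count n.+1 rw0 k = fun w => \sum_(j < N | j != target i0 rw0)
    ext_count n ((target i0 rw0, j, k) :: rw0) (~~ k) w) // green_sum.
apply: ler_sum => j jt; rewrite Rtrunc_hitgf //.
have [wy ty] := mulgen_reduced k wr jt; rewrite mulgen_cons // in wy ty.
have ay : alternates ((target i0 rw0, j, k) :: rw0) (~~ k) by case: k {IH ak wy ty}.
have := IH _ _ wy ay; rewrite ty => IHj.
apply: le_trans (ler_wpM2l (hitgf_ge0 p_ge0 _ lam_ge0 _ _ _) IHj) _.
apply: le_trans (hitgf_green_le p_ge0 _ lam_ge0 _ _ _ _ (@ext_count_ge0 _ _ _)) _.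
by rewrite mulSn addnS.
Qed.

Lemma sum_altpath_Rtrunc_le T M k : lam < 1 ->
  \sum_(n < M) altpath_sum (Rtrunc T) n i0 k <= (1 - lam)^-1.
Proof.
move=> l1.
apply: (@le_trans _ _ (\sum_(n < M) green p i0 lam (M * T).+1 (ext_count n [::] k) [::])).
  apply: ler_sum => n _; apply: le_trans (altpath_green_le T n (isT : reduced i0 [::]) isT) _.
  apply: green_leq => //; first exact: ext_count_ge0.
  by rewrite ltnS leq_mul2r ltnW ?orbT.
by rewrite -green_sum green_le_inv // => w; apply: sum_ext_count_le1.
Qed.

End AlternatingPaths.

Section GeneratingFunctionR.
Variables (R : realType) (N : nat) (p : 'I_N -> 'I_N -> bool -> R).
Hypothesis p_ge0 : forall i j k, i != j -> 0 <= p i j k.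
Hypothesis p_sum : forall i, \sum_(j < N | j != i) \sum_(k : bool) p i j k = 1.
Variable lam : R.

Section UnitInterval.
Hypotheses (lam_ge0 : 0 <= lam) (lam_le1 : lam <= 1).

Lemma Rtrunc_nondecreasing t j k : nondecreasing_seq (fun T => Rtrunc p lam T t j k).
Proof.
apply/nondecreasing_seqP => T; rewrite /Rtrunc /hitgf big_ord_recr /= lerDl.
by rewrite mulr_ge0 ?exprn_ge0 ?hitprob_ge0.
Qed.

Lemma Rtrunc_cvg t j k : cvgn (fun T => Rtrunc p lam T t j k).
Proof.
apply: nondecreasing_is_cvgn; first exact: Rtrunc_nondecreasing.
by exists 1 => _ [T _ <-]; apply: hitgf_le1.
Qed.

Lemma Rgen_lim t j k : Rgen p t j k lam = limn (fun T => Rtrunc p lam T t j k).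
Proof.
by rewrite /Rgen; congr (limn _); apply: funext => T; rewrite big_mkord.
Qed.

Lemma Rtrunc_le_Rgen T t j k : Rtrunc p lam T t j k <= Rgen p t j k lam.
Proof.
rewrite Rgen_lim; apply: nondecreasing_cvgn_le; [exact: Rtrunc_nondecreasing|exact: Rtrunc_cvg].
Qed.

Lemma Rgen_ge0 t j k : 0 <= Rgen p t j k lam.
Proof. exact: le_trans (hitgf_ge0 p_ge0 _ lam_ge0 _ _ _) (Rtrunc_le_Rgen 0 t j k). Qed.

Lemma altpath_Rtrunc_cvg n t k :
  ((fun T => altpath_sum (Rtrunc p lam T) n t k) @ \oo -->
   altpath_sum (fun t j k => Rgen p t j k lam) n t k)%classic.
Proof.
elim: n t k => [|n IH] t k /=; first exact: cvg_cst.
apply: cvg_big => [|j _]; first exact: add_continuous.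
by apply: cvgM => //; rewrite Rgen_lim; apply: Rtrunc_cvg.
Qed.

End UnitInterval.

(* One step of the walk from e_t already reaches A_{t,j}^{(k)} with probability p t j k. *)
Lemma Rgen_gt0 t j k : 0 < lam <= 1 -> t != j -> 0 < p t j k -> 0 < Rgen p t j k lam.
Proof.
move=> /andP[l0 l1] tj pp; have lam_ge0 := ltW l0.
apply: lt_le_trans (Rtrunc_le_Rgen lam_ge0 l1 2 t j k).
rewrite /Rtrunc hitgfS /= mulr_gt0 // /step /=.
rewrite (bigD1 j) 1?eq_sym //= (bigD1 k) //= hitgfS eqxx mulr1 -addrA ltr_pwDl //.
rewrite addr_ge0 ?sumr_ge0 // => [k' _|j' /andP[jt _]]; rewrite ?sumr_ge0 // => *;
  by rewrite mulr_ge0 ?hitgf_ge0 // p_ge0 // eq_sym.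
Qed.

Lemma sum_altpath_Rgen_le M t k : 0 <= lam < 1 ->
  \sum_(n < M) altpath_sum (fun t j k => Rgen p t j k lam) n t k <= (1 - lam)^-1.
Proof.
move=> /andP[l0 l1].
have cv : ((fun T => \sum_(n < M) altpath_sum (Rtrunc p lam T) n t k) @ \oo -->
           \sum_(n < M) altpath_sum (fun t j k => Rgen p t j k lam) n t k)%classic.
  by apply: cvg_big => [|n _]; [exact: add_continuous|exact: (altpath_Rtrunc_cvg l0 (ltW l1))].
rewrite -(cvg_lim (@Rhausdorff R) cv); apply: limr_le; first exact: cvgP cv.
by apply: nearW => T; apply: sum_altpath_Rtrunc_le.
Qed.

End GeneratingFunctionR.

(* If r > lam, then 1 - r^m = (1 - r) \sum_(i < m) r^i keeps r^m above (r - lam) / (1 - lam) > 0,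
   so the partial sums would grow linearly. *)
Lemma bounded_geometric_sums_le (R : archiRealFieldType) (r lam : R) : 0 <= r -> lam < 1 ->
  (forall M, \sum_(m < M) r ^+ m <= (1 - lam)^-1) -> r <= lam.
Proof.
move=> r0 l1 hs; have l0 : 0 < 1 - lam by rewrite subr_gt0.
have unbounded d : 0 < d -> ~ (forall m, d <= r ^+ m).
  move=> d0 hd; have := @archi_boundP _ ((1 - lam)^-1 / d).
  rewrite divr_ge0 ?invr_ge0 ?ltW // ltr_pdivrMr // => /(_ isT).
  rewrite ltNge => /negP; apply; apply: le_trans (hs _).
  by rewrite mulr_natl -[X in d *+ X]card_ord -sumr_const; apply: ler_sum.
have [r1|r1] := leP r 1; last first.
  by exfalso; apply: (unbounded 1 ltr01) => m; rewrite exprn_ege1 ?ltW.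
rewrite leNgt; apply/negP => lr; apply: (unbounded ((r - lam) / (1 - lam))).
  by rewrite divr_gt0 // subr_gt0.
have r1' : 0 <= 1 - r by rewrite subr_ge0.
move=> m; have := ler_wpM2l r1' (hs m).
have -> : (1 - r) * \sum_(i < m) r ^+ i = 1 - r ^+ m.
  by rewrite -opprB mulNr -subrX1 opprB.
rewrite (_ : (r - lam) / (1 - lam) = 1 - (1 - r) / (1 - lam)); last by field; rewrite lt0r_neq0.
by rewrite lerBlDr addrC -lerBlDr.
Qed.

Lemma normc_ge0 (R : rcfType) (x : R[i]) : 0 <= ComplexField.Normc.normc x.
Proof. by case: x => a b; rewrite /= sqrtr_ge0. Qed.

Lemma normc_real (R : rcfType) (x : R) : 0 <= x -> ComplexField.Normc.normc (x%:C)%C = x.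
Proof. by move=> x0; rewrite /= expr0n /= addr0 sqrtr_sqr ger0_norm. Qed.

Lemma normc_sum (R : rcfType) (I : Type) (r : seq I) (P : pred I) (F : I -> R[i]) :
  ComplexField.Normc.normc (\sum_(i <- r | P i) F i) <=
  \sum_(i <- r | P i) ComplexField.Normc.normc (F i).
Proof.
elim/big_ind2: _ => [|x1 x2 y1 y2 h1 h2|//]; first by rewrite ComplexField.Normc.normc0.
by apply: le_trans (le_normcD _ _) _; apply: lerD.
Qed.

Lemma char_poly_trmx (F : fieldType) n (A : 'M[F]_n) : char_poly A^T = char_poly A.
Proof.
rewrite /char_poly /char_poly_mx -det_tr; congr (\det _).
by rewrite raddfB /= tr_scalar_mx -map_trmx trmxK.
Qed.

(* For an eigenvector v and u := |v|, induction gives |mu|^m u <= max(u) w_m. *)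
Lemma eigenvalueC_normc_le (R : realType) n (K : 'M[R]_n) (w : nat -> 'I_n -> R) lam mu :
  nonneg_mx K -> (forall m a, 0 <= w m a) -> (forall a, 1 <= w 0%N a) ->
  (forall m a, \sum_b K a b * w m b <= w m.+1 a) ->
  (forall M a, \sum_(m < M) w m a <= (1 - lam)^-1) -> lam < 1 ->
  eigenvalueC K mu -> ComplexField.Normc.normc mu <= lam.
Proof.
move=> K0 w0 w1 wK ws l1.
rewrite /eigenvalueC -char_poly_trmx -eigenvalue_root_char => /eigenvalueP[v hv vn0].
set u := fun b => ComplexField.Normc.normc (v 0 b).
set r := ComplexField.Normc.normc mu.
have r0 : 0 <= r by apply: normc_ge0.
have hu a : r * u a <= \sum_b K a b * u b.
  rewrite /u /r -ComplexField.Normc.normcM.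
  have -> : mu * v 0 a = \sum_b v 0 b * (K a b)%:C%C.
    have := congr1 (fun M : 'rV_n => M 0 a) hv; rewrite !mxE => <-.
    by apply: eq_bigr => b _; rewrite !mxE.
  apply: le_trans (normc_sum _ _ _) _; apply: ler_sum => b _.
  by rewrite ComplexField.Normc.normcM normc_real // mulrC.
have [a0 va0] : exists a, v 0 a != 0.
  apply/existsP; apply: contraR vn0 => /existsPn h.
  by apply/eqP/rowP => a; rewrite mxE; apply/eqP; rewrite -[_ == _]negbK h.
have [amax _ hmax] := @arg_maxP _ R _ a0 predT u isT.
set U := u amax.
have U0 : 0 < U.
  apply: lt_le_trans (hmax a0 isT); rewrite lt_def normc_ge0 andbT.
  by apply: contra va0 => /eqP/ComplexField.Normc.eq0_normc/eqP.
have hpow m a : r ^+ m * u a <= U * w m a.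
  elim: m a => [|m IH] a.
    rewrite expr0 mul1r; apply: le_trans (hmax a isT) _.
    exact: ler_peMr (ltW U0) (w1 a).
  rewrite exprSr -mulrA; apply: le_trans (ler_wpM2l (exprn_ge0 _ r0) (hu a)) _.
  apply: le_trans (ler_wpM2l (ltW U0) (wK m a)).
  rewrite !mulr_sumr; apply: ler_sum => b _.
  by rewrite mulrCA [U * _]mulrCA ler_wpM2l.
apply: (bounded_geometric_sums_le r0 l1) => M; apply: le_trans (ws M amax).
by apply: ler_sum => m _; have := hpow m amax; rewrite -/U mulrC ler_pM2l.
Qed.

Lemma spectral_radius_le (R : realType) n (K : 'M[R]_n) (lam : R) :
  0 <= lam -> (forall mu, eigenvalueC K mu -> ComplexField.Normc.normc mu <= lam) ->
  spectral_radius K <= lam.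
Proof.
move=> l0 hmu; rewrite /spectral_radius; set S := (X in sup X).
have [[x Sx]|S0] := pselect (S !=set0)%classic.
  by apply: ge_sup => [|_ [mu /hmu ? <-]]; first by exists x.
by rewrite (_ : S = set0%classic) ?sup0 // -subset0 => x Sx; apply: S0; exists x.
Qed.

Lemma expmx_ge0 (R : realType) n (A : 'M[R]_n) m : nonneg_mx A -> nonneg_mx (A ^+ m).
Proof.
move=> A0; elim: m => [|m IH] a b; first by rewrite expr0 mxE ler0n.
by rewrite exprS -mulmxE mxE sumr_ge0 // => c _; rewrite mulr_ge0.
Qed.

Lemma expmxS_gt0 (R : realType) n (A : 'M[R]_n) m a b c : nonneg_mx A ->
  0 < (A ^+ m) a c -> 0 < A c b -> 0 < (A ^+ m.+1) a b.
Proof.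
move=> A0 h1 h2; rewrite exprSr -mulmxE mxE (bigD1 c) //= ltr_pwDl ?mulr_gt0 //.
by rewrite sumr_ge0 // => d _; rewrite mulr_ge0 ?expmx_ge0.
Qed.

Lemma exists_ord_neq2 N (i l : 'I_N) : (3 <= N)%N -> exists j : 'I_N, (j != i) && (j != l).
Proof.
move=> hN; have : (0 < #|~: [set i; l]|)%N.
  have := cardsC [set i; l]; rewrite cards2 card_ord => eN.
  by rewrite lt0n; apply: contraTneq hN => e; rewrite -eN e addn0 ltnS; case: (i != l).
by case/card_gt0P => j; rewrite !inE negb_or => ?; exists j.
Qed.

Section OffDiagonalBlocks.
Variables (R : realType) (N : nat) (C : bool -> 'M[R]_N).
Local Notation K := (block_mx 0 (C true) (C false) 0).

Definition blk (s : bool) (i : 'I_N) : 'I_(N + N) := if s then lshift N i else rshift N i.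

Lemma blkP (a : 'I_(N + N)) : exists s i, a = blk s i.
Proof.
by rewrite -(splitK a); case: (fintype.split a) => i; [exists true | exists false]; exists i.
Qed.

Definition blk_fun T (f : bool -> 'I_N -> T) (a : 'I_(N + N)) : T :=
  match fintype.split a with inl i => f true i | inr i => f false i end.

Lemma blk_funE T (f : bool -> 'I_N -> T) s i : blk_fun f (blk s i) = f s i.
Proof.
case: s; rewrite /blk_fun /blk; first by rewrite -[lshift _ _]/(unsplit (inl _)) unsplitK.
by rewrite -[rshift _ _]/(unsplit (inr _)) unsplitK.
Qed.

Lemma offdiag_blockE s i s' j : K (blk s i) (blk s' j) = if s == s' then 0 else C s i j.
Proof.
by case: s; case: s'; rewrite /= ?block_mxEul ?block_mxEur ?block_mxEdl ?block_mxEdr ?mxE.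
Qed.

Lemma sum_blk (F : 'I_(N + N) -> R) : \sum_a F a = \sum_i F (blk true i) + \sum_i F (blk false i).
Proof. exact: big_split_ord. Qed.

Lemma offdiag_block_mulE s i (v : bool -> 'I_N -> R) :
  \sum_b K (blk s i) b * blk_fun v b = \sum_j C s i j * v (~~ s) j.
Proof.
rewrite sum_blk; under eq_bigr do rewrite offdiag_blockE blk_funE.
under [X in _ + X]eq_bigr do rewrite offdiag_blockE blk_funE.
case: s => /=; first by rewrite [X in X + _]big1 ?add0r // => j _; rewrite mul0r.
by rewrite [X in _ + X]big1 ?addr0 // => j _; rewrite mul0r.
Qed.

Hypothesis C_ge0 : forall s, nonneg_mx (C s).

Lemma offdiag_block_ge0 : nonneg_mx K.
Proof.
rewrite /nonneg_mx => a b; have [s [i ->]] := blkP a; have [s' [j ->]] := blkP b.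
by rewrite offdiag_blockE; case: (s == s') => //; apply: C_ge0.
Qed.

Lemma offdiag_block_irreducible : (3 <= N)%N ->
  (forall s i j, i != j -> 0 < C s i j) -> irreducible_mx K.
Proof.
move=> hN C_gt0.
have Kpos s i j : i != j -> 0 < K (blk s i) (blk (~~ s) j).
  by case: s; rewrite offdiag_blockE /= => /C_gt0.
have stepK m a b c : 0 < (K ^+ m) a c -> 0 < K c b -> 0 < (K ^+ m.+1) a b.
  exact/expmxS_gt0/offdiag_block_ge0.
have start a : 0 < (K ^+ 0) a a by rewrite expr0 mxE eqxx ltr01.
move=> a b; have [s [i ->]] := blkP a; have [s' [l ->]] := blkP b.
have [<-|/negPf ss'] := eqVneq s s'.
  have [<-|il] := eqVneq i l; first by exists 0%N.
  have [j /andP[ji jl]] := exists_ord_neq2 i l hN.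
  exists 2%N; apply: (stepK _ _ _ (blk (~~ s) j)).
    by apply: (stepK _ _ _ (blk s i)) => //; apply: Kpos; rewrite eq_sym.
  by rewrite -{2}[s]negbK; apply: Kpos.
have -> : s' = ~~ s by case: s s' ss' => [] [].
have [<-|il] := eqVneq i l; last by exists 1%N; apply: (stepK _ _ _ (blk s i)) => //; apply: Kpos.
have [j /andP[ji _]] := exists_ord_neq2 i i hN.
have [j' /andP[j'j j'i]] := exists_ord_neq2 j i hN.
exists 3%N; apply: (stepK _ _ _ (blk s j')); last exact: Kpos.
apply: (stepK _ _ _ (blk (~~ s) j)).
  by apply: (stepK _ _ _ (blk s i)) => //; apply: Kpos; rewrite eq_sym.
by rewrite -{2}[s]negbK; apply: Kpos; rewrite eq_sym.
Qed.

Lemma offdiag_block_spectral_radius_le (Rf : 'I_N -> 'I_N -> bool -> R) (lam : R) :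
  (forall i j s, 0 <= Rf i j s) -> (forall s i, C s i i = 0) ->
  (forall s i j, i != j -> C s i j <= Rf i j s) ->
  (forall M i s, \sum_(n < M) altpath_sum Rf n i s <= (1 - lam)^-1) -> 0 <= lam < 1 ->
  spectral_radius K <= lam.
Proof.
move=> Rf0 C_diag C_le hsum /andP[l0 l1]; apply: spectral_radius_le => // mu hmu.
pose w m := blk_fun (fun s i => altpath_sum Rf m i s).
apply: (@eigenvalueC_normc_le _ _ K w lam mu _ _ _ _ _ l1 hmu).
- exact: offdiag_block_ge0.
- by move=> m a; have [s [i ->]] := blkP a; rewrite /w blk_funE altpath_sum_ge0.
- by move=> a; have [s [i ->]] := blkP a; rewrite /w blk_funE.
- move=> m a; have [s [i ->]] := blkP a; rewrite /w offdiag_block_mulE blk_funE /=.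
  rewrite [X in _ <= X]big_mkcond; apply: ler_sum => j _ /=.
  have [->|ji] := eqVneq j i; first by rewrite C_diag mul0r.
  by rewrite ler_wpM2r ?altpath_sum_ge0 // C_le // eq_sym.
- by move=> M a; have [s [i ->]] := blkP a; under eq_bigr do rewrite /w blk_funE.
Qed.

End OffDiagonalBlocks.

Section MatrixB.
Variables (R : realType) (N : nat) (p len : 'I_N -> 'I_N -> bool -> R).
Hypothesis p_ge0 : forall i j k, i != j -> 0 <= p i j k.
Hypothesis p_sum : forall i, \sum_(j < N | j != i) \sum_(k : bool) p i j k = 1.
Variables (lam z : R).

Lemma BmxE k i j :
  Bmx p len k lam z i j = if i == j then 0 else z `^ len i j k * Rgen p i j k lam.
Proof. by rewrite mxE; case: eqP => _; rewrite /= ?subrr ?mul0r ?subr0 ?mul1r. Qed.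

Lemma Bmx_ge0 k : 0 <= lam <= 1 -> nonneg_mx (Bmx p len k lam z).
Proof.
move=> /andP[l0 l1] i j; rewrite BmxE; case: eqP => // _.
by rewrite mulr_ge0 ?powR_ge0 ?Rgen_ge0.
Qed.

Lemma Bmx_gt0 k i j : 0 < lam <= 1 -> 0 < z -> i != j -> 0 < p i j k ->
  0 < Bmx p len k lam z i j.
Proof. by move=> hl z0 ij pp; rewrite BmxE (negbTE ij) mulr_gt0 ?powR_gt0 ?Rgen_gt0. Qed.

Lemma Bmx_le_Rgen k i j : 0 <= lam <= 1 -> 0 < z <= 1 -> 0 <= len i j k -> i != j ->
  Bmx p len k lam z i j <= Rgen p i j k lam.
Proof.
move=> /andP[l0 l1] hz len0 ij; rewrite BmxE (negbTE ij) ler_piMl ?Rgen_ge0 //.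
by rewrite -[X in _ <= X](powRr0 z) ger_powR.
Qed.

End MatrixB.

Theorem proposition5p8 (R : realType) (N : nat) (hN : (3 <= N)%N)
  (p : 'I_N -> 'I_N -> bool -> R)
  (hp : forall (i j : 'I_N) (k : bool), i != j -> 0 < p i j k < 1)
  (hsum : forall i : 'I_N, \sum_(j < N | j != i) (p i j true + p i j false) = 1)
  (len : 'I_N -> 'I_N -> bool -> R)
  (hlen : forall i j k, 0 <= len i j k) :
  (forall lam z : R, 0 < lam <= 1 -> 0 < z <= 1 ->
     nonneg_mx (Kmx p len lam z) /\ irreducible_mx (Kmx p len lam z)) /\
  (forall lam z : R, 0 < lam < 1 -> 0 < z <= 1 ->
     spectral_radius (Kmx p len lam z) < 1).
Proof.
have p_ge0 i j k : i != j -> 0 <= p i j k by move=> /(hp _ _ k)/andP[/ltW].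
have p_sum i : \sum_(j < N | j != i) \sum_(k : bool) p i j k = 1.
  by rewrite -(hsum i); apply: eq_bigr => j _; rewrite big_bool.
split=> lam z hl hz; pose B k := Bmx p len k lam z.
  have hl' : 0 <= lam <= 1 by case/andP: hl => /ltW ->.
  have B0 k : nonneg_mx (B k) := Bmx_ge0 len p_ge0 p_sum z k hl'.
  split; first exact: (offdiag_block_ge0 B0).
  apply: (offdiag_block_irreducible (C := B)) => // k i j ij.
  have [pp _] := andP (hp i j k ij).
  exact: (Bmx_gt0 len p_ge0 p_sum hl (andP hz).1 ij pp).
have hl0 : 0 <= lam < 1 by case/andP: hl => /ltW ->.
have hl' : 0 <= lam <= 1 by case/andP: hl0 => -> /ltW.
have [l0 l1] := andP hl'.
apply: le_lt_trans (andP hl).2; apply: (offdiag_block_spectral_radius_le (C := B)).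
- by move=> k; exact: (Bmx_ge0 len p_ge0 p_sum z k hl').
- exact: (Rgen_ge0 p_ge0 p_sum l0 l1).
- by move=> k i; rewrite /B BmxE eqxx.
- by move=> k i j; exact: (Bmx_le_Rgen p_ge0 p_sum hl' hz (hlen i j k)).
- by move=> M i k; exact: (sum_altpath_Rgen_le p_ge0 p_sum M i k hl0).
- exact: hl0.
Qed.
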